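(* Let $A$ be a real $m\times m$ matrix, $f$ in the range of $A$, $y$ the minimal-norm solution of $Ay=f$ (so $y\perp\mathcal{N}(A)$), and $q\in(0,1)$. Define $u_1=0$ and $u_{n+1}=q^nT_{q^n}^{-1}u_n+T_{q^n}^{-1}A^*f$ for $n\ge1$. Then $\lim_{n\to\infty}\|u_n-y\|=0$.
   Context: $A^*$ is the transpose of $A$, $T:=A^*A$, $T_a:=T+aI$ for $a>0$; $\mathcal{N}(A)=\{u:Au=0\}$; $\|\cdot\|$ is the Euclidean norm. *)

(* real m x m matrices as functions nat -> nat -> R
   (only entries with indices < m are meaningful), vectors as nat -> R. *)
From Stdlib Require Import Reals Lra Lia.
Open Scope R_scope.

Definition Vec := nat -> R.
Definition Mat := nat -> nat -> R.

Fixpoint sumR (n : nat) (f : nat -> R) : R :=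
  match n with
  | O => 0
  | S k => sumR k f + f k
  end.

Definition matvec (m : nat) (A : Mat) (x : Vec) : Vec :=
  fun i => sumR m (fun j => A i j * x j).

Definition matmul (m : nat) (A B : Mat) : Mat :=
  fun i j => sumR m (fun k => A i k * B k j).

Definition transp (A : Mat) : Mat := fun i j => A j i.

Definition idM : Mat := fun i j => if Nat.eqb i j then 1 else 0.

Definition Tmat (m : nat) (A : Mat) : Mat := matmul m (transp A) A.
Definition Ta (m : nat) (A : Mat) (a : R) : Mat :=
  fun i j => Tmat m A i j + a * idM i j.

Definition is_inverse (m : nat) (M B : Mat) : Prop :=
  forall i j, (i < m)%nat -> (j < m)%nat ->
    matmul m M B i j = idM i j /\ matmul m B M i j = idM i j.

Definition vsub (x y : Vec) : Vec := fun i => x i - y i.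

Definition norm (m : nat) (x : Vec) : R := sqrt (sumR m (fun i => x i * x i)).

Definition veq (m : nat) (x y : Vec) : Prop := forall i, (i < m)%nat -> x i = y i.

Definition in_range (m : nat) (A : Mat) (f : Vec) : Prop :=
  exists x, veq m (matvec m A x) f.

Definition min_norm_solution (m : nat) (A : Mat) (f y : Vec) : Prop :=
  veq m (matvec m A y) f /\
  forall z, veq m (matvec m A z) f -> norm m y <= norm m z.

From Stdlib Require Import Reals Lra Lia Classical.
Open Scope R_scope.

(* The minimal-norm solution [y] is orthogonal to [ker A = ker T]; since [T] is symmetric, a
   linear relation among [y, T y, ..., T^m y] then shows [y = T w] for some [w].  The error
   [e_n = u_n - y] satisfies [(T + q^n) e_(n+1) = q^n e_n] with [e_1 = T (-w)].  Because [T]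
   commutes with [T + q^n] and [v |-> q^n (T + q^n)^-1 v] is a contraction ([T] is positive
   semidefinite), every error is [e_n = T W_n] with [|W_n| <= |w|]; then
   [e_(n+1) = T W_(n+1) = q^n (W_n - W_(n+1))] gives [|e_(n+1)| <= 2 q^n |w|]. *)

Lemma sumR_ext n f g : (forall j, (j < n)%nat -> f j = g j) -> sumR n f = sumR n g.
Proof.
  induction n as [|n IH]; intros H; simpl; [reflexivity|].
  rewrite IH, (H n); auto; intros; apply H; lia.
Qed.

Lemma sumR_plus n f g : sumR n (fun j => f j + g j) = sumR n f + sumR n g.
Proof. induction n as [|n IH]; simpl; [lra | rewrite IH; lra]. Qed.

Lemma sumR_scal n c f : sumR n (fun j => c * f j) = c * sumR n f.
Proof. induction n as [|n IH]; simpl; [lra | rewrite IH; lra]. Qed.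

Lemma sumR_minus n f g : sumR n (fun j => f j - g j) = sumR n f - sumR n g.
Proof. induction n as [|n IH]; simpl; [lra | rewrite IH; lra]. Qed.

Lemma sumR_eq0 n f : (forall j, (j < n)%nat -> f j = 0) -> sumR n f = 0.
Proof.
  intros H; rewrite (sumR_ext n f (fun _ => 0)) by auto.
  clear H; induction n as [|n IH]; simpl; lra.
Qed.

Lemma sumR_swap n k F :
  sumR n (fun i => sumR k (fun j => F i j)) = sumR k (fun j => sumR n (fun i => F i j)).
Proof.
  induction n as [|n IH]; simpl.
  - symmetry; apply sumR_eq0; auto.
  - rewrite IH, <- sumR_plus; reflexivity.
Qed.

Lemma sumR_shift n f : sumR (S n) f = f 0%nat + sumR n (fun j => f (S j)).
Proof.
  induction n as [|n IH]; [simpl; lra|].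
  change (sumR (S (S n)) f) with (sumR (S n) f + f (S n)); rewrite IH; simpl; lra.
Qed.

Lemma sumR_le n f g : (forall j, (j < n)%nat -> f j <= g j) -> sumR n f <= sumR n g.
Proof.
  induction n as [|n IH]; intros H; simpl; [lra|].
  apply Rplus_le_compat; [apply IH; intros; apply H|apply H]; lia.
Qed.

Lemma sumR_idM m i x : (i < m)%nat -> sumR m (fun j => idM i j * x j) = x i.
Proof.
  induction m as [|m IH]; intros Hi; [lia|]; simpl; unfold idM at 2.
  destruct (Nat.eqb_spec i m) as [->|Hne].
  - rewrite sumR_eq0; [lra|]; intros j Hj; unfold idM.
    destruct (Nat.eqb_spec m j); [lia|lra].
  - rewrite IH by lia; lra.
Qed.

Lemma matvec_ext m M x z i :
  (forall l, (l < m)%nat -> x l = z l) -> matvec m M x i = matvec m M z i.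
Proof. intros H; apply sumR_ext; intros; rewrite H; auto. Qed.

Lemma matvec_lin m M c d x z i :
  matvec m M (fun l => c * x l + d * z l) i = c * matvec m M x i + d * matvec m M z i.
Proof. unfold matvec; rewrite <- !sumR_scal, <- sumR_plus; apply sumR_ext; intros; ring. Qed.

Lemma matvec_scal m M c x i : matvec m M (fun l => c * x l) i = c * matvec m M x i.
Proof. unfold matvec; rewrite <- sumR_scal; apply sumR_ext; intros; ring. Qed.

Lemma matvec_sum m M n (c : nat -> R) (v : nat -> Vec) i :
  matvec m M (fun l => sumR n (fun j => c j * v j l)) i
  = sumR n (fun j => c j * matvec m M (v j) i).
Proof.
  unfold matvec.
  rewrite (sumR_ext m _ (fun l => sumR n (fun j => c j * (M i l * v j l))))
    by (intros; rewrite <- sumR_scal; apply sumR_ext; intros; ring).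
  rewrite sumR_swap; apply sumR_ext; intros; apply sumR_scal.
Qed.

Lemma matvec_matmul m M B x i : matvec m M (matvec m B x) i = matvec m (matmul m M B) x i.
Proof.
  unfold matvec, matmul.
  rewrite (sumR_ext m _ (fun l => sumR m (fun j => x j * (M i l * B l j))))
    by (intros; rewrite <- sumR_scal; apply sumR_ext; intros; ring).
  rewrite sumR_swap; apply sumR_ext; intros.
  rewrite sumR_scal; ring.
Qed.

Lemma matvec_inverse m M B x i :
  is_inverse m M B -> (i < m)%nat -> matvec m M (matvec m B x) i = x i.
Proof.
  intros HB Hi; rewrite matvec_matmul; unfold matvec.
  rewrite (sumR_ext m _ (fun j => idM i j * x j)) by (intros j Hj; rewrite (proj1 (HB i j Hi Hj)); reflexivity).
  apply sumR_idM; auto.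
Qed.

Lemma matvec_Ta m A a x i :
  (i < m)%nat -> matvec m (Ta m A a) x i = matvec m (Tmat m A) x i + a * x i.
Proof.
  intros Hi; unfold matvec, Ta.
  rewrite <- (sumR_idM m i x Hi), <- sumR_scal, <- sumR_plus; apply sumR_ext; intros; ring.
Qed.

Definition dot (m : nat) (x z : Vec) : R := sumR m (fun i => x i * z i).

Lemma dot_comm m x z : dot m x z = dot m z x.
Proof. apply sumR_ext; intros; ring. Qed.

Lemma dot_eq0_r m x z : (forall i, (i < m)%nat -> z i = 0) -> dot m x z = 0.
Proof. intros H; apply sumR_eq0; intros; rewrite H; auto; ring. Qed.

Lemma dot_self_ge0 m x : 0 <= dot m x x.
Proof.
  rewrite <- (sumR_eq0 m (fun _ => 0)) by auto.
  apply sumR_le; intros; nra.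
Qed.

Lemma dot_self_eq0 m x : dot m x x = 0 -> forall i, (i < m)%nat -> x i = 0.
Proof.
  induction m as [|m IH]; intros H i Hi; [lia|].
  change (dot m x x + x m * x m = 0) in H.
  pose proof (dot_self_ge0 m x).
  destruct (Nat.eq_dec i m) as [->|Hne]; [nra|].
  apply IH; [nra|lia].
Qed.

Lemma dot_transp m A z x : dot m (matvec m (transp A) z) x = dot m z (matvec m A x).
Proof.
  unfold dot, matvec, transp.
  rewrite (sumR_ext m _ (fun i => sumR m (fun j => z j * (A j i * x i))))
    by (intros; rewrite Rmult_comm, <- sumR_scal; apply sumR_ext; intros; ring).
  rewrite sumR_swap; apply sumR_ext; intros.
  rewrite <- sumR_scal; apply sumR_ext; intros; ring.
Qed.

Lemma matvec_Tmat m A x i : matvec m (Tmat m A) x i = matvec m (transp A) (matvec m A x) i.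
Proof. symmetry; apply matvec_matmul. Qed.

Lemma dot_Tmat m A x z : dot m (matvec m (Tmat m A) x) z = dot m (matvec m A x) (matvec m A z).
Proof.
  rewrite <- dot_transp; apply sumR_ext; intros; rewrite matvec_Tmat; reflexivity.
Qed.

Lemma Tmat_sym m A x z : dot m (matvec m (Tmat m A) x) z = dot m x (matvec m (Tmat m A) z).
Proof. rewrite dot_Tmat, (dot_comm m x), dot_Tmat; apply dot_comm. Qed.

Lemma Tmat_psd m A x : 0 <= dot m (matvec m (Tmat m A) x) x.
Proof. rewrite dot_Tmat; apply dot_self_ge0. Qed.

Definition perp_ker (m : nat) (M : Mat) (y : Vec) : Prop :=
  forall v, (forall i, (i < m)%nat -> matvec m M v i = 0) -> dot m y v = 0.

Lemma quadratic_ge0_linear_coef_eq0 (D S : R) :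
  0 <= S -> (forall t, 0 <= 2 * t * D + t * t * S) -> D = 0.
Proof.
  intros HS Hq; specialize (Hq (- D / (S + 1))).
  replace (2 * (- D / (S + 1)) * D + (- D / (S + 1)) * (- D / (S + 1)) * S)
    with (- (D * D) * (S + 2) / ((S + 1) * (S + 1))) in Hq by (field; lra).
  assert (0 <= - (D * D) * (S + 2)).
  { apply (Rmult_le_reg_r (/ ((S + 1) * (S + 1)))).
    - apply Rinv_0_lt_compat; nra.
    - rewrite Rmult_0_l; exact Hq. }
  nra.
Qed.

Lemma min_norm_solution_perp_ker m A f y : min_norm_solution m A f y -> perp_ker m A y.
Proof.
  intros [Hy Hmin] v Hv.
  apply (quadratic_ge0_linear_coef_eq0 _ (dot m v v) (dot_self_ge0 m v)); intros t.
  set (z := fun l => 1 * y l + t * v l).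
  assert (Hz : veq m (matvec m A z) f).
  { intros i Hi; unfold z; rewrite matvec_lin, Hv, Hy by auto; ring. }
  assert (Hzz : dot m z z = dot m y y + 2 * t * dot m y v + t * t * dot m v v).
  { unfold dot, z; rewrite <- !sumR_scal, <- !sumR_plus; apply sumR_ext; intros; ring. }
  specialize (Hmin z Hz); unfold norm in Hmin.
  apply sqrt_le_0 in Hmin; try apply dot_self_ge0.
  change (dot m y y <= dot m z z) in Hmin; lra.
Qed.

Lemma perp_ker_A_Tmat m A y : perp_ker m A y -> perp_ker m (Tmat m A) y.
Proof.
  intros Hy v Hv; apply Hy, dot_self_eq0.
  rewrite <- dot_Tmat, dot_comm; apply dot_eq0_r; exact Hv.
Qed.

Lemma underdetermined_homogeneous_system k m (M : nat -> nat -> R) : (m < k)%nat ->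
  exists c : nat -> R, (exists j, (j < k)%nat /\ c j <> 0) /\
    forall i, (i < m)%nat -> sumR k (fun j => M i j * c j) = 0.
Proof.
  revert m M; induction k as [|k IH]; intros m M Hmk; [lia|].
  destruct (classic (exists i0, (i0 < m)%nat /\ M i0 k <> 0)) as [[i0 [Hi0 Hp]] | Hno].
  - (* eliminate the unknown [k] using the pivot row [i0]; row [m'] takes its place *)
    destruct m as [|m']; [lia|]. set (p := M i0 k) in *.
    set (row := fun i => if Nat.eqb i i0 then m' else i).
    set (M' := fun i j => M (row i) j - M (row i) k * M i0 j / p).
    destruct (IH m' M') as [c' [[j1 [Hj1 Hc1]] Hsol]]; [lia|].
    set (S0 := sumR k (fun j => M i0 j * c' j)).
    exists (fun j => if Nat.eqb j k then - S0 / p else c' j); split.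
    + exists j1; split; [lia|]. destruct (Nat.eqb_spec j1 k); [lia|auto].
    + intros i Hi; simpl; rewrite Nat.eqb_refl.
      rewrite (sumR_ext k _ (fun j => M i j * c' j))
        by (intros j Hj; destruct (Nat.eqb_spec j k); [lia|auto]).
      destruct (Nat.eq_dec i i0) as [->|Hne]; [fold S0 p; field; exact Hp|].
      set (i' := if Nat.eqb i m' then i0 else i).
      assert (Hi' : (i' < m')%nat) by (unfold i'; destruct (Nat.eqb_spec i m'); lia).
      assert (Hrow : row i' = i).
      { unfold row, i'; destruct (Nat.eqb_spec i m'); destruct (Nat.eqb_spec i0 i0);
          try lia; destruct (Nat.eqb_spec i i0); lia. }
      specialize (Hsol i' Hi'); unfold M' in Hsol; rewrite Hrow in Hsol.
      rewrite (sumR_ext k _ (fun j => M i j * c' j - (M i k / p) * (M i0 j * c' j))) in Hsol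
        by (intros; unfold Rdiv; ring).
      rewrite sumR_minus, sumR_scal in Hsol; fold S0 in Hsol.
      unfold Rdiv in *; lra.
  - exists (fun j => if Nat.eqb j k then 1 else 0); split.
    + exists k; split; [lia|]. rewrite Nat.eqb_refl; lra.
    + intros i Hi; simpl; rewrite Nat.eqb_refl.
      rewrite sumR_eq0 by (intros j Hj; destruct (Nat.eqb_spec j k); [lia|ring]).
      destruct (Req_dec (M i k) 0) as [->|Hn]; [ring|].
      exfalso; apply Hno; eauto.
Qed.

Section SymmetricRange.

Variables (m : nat) (M : Mat).
Hypothesis M_sym : forall x z, dot m (matvec m M x) z = dot m x (matvec m M z).

Definition krylov (y : Vec) (j : nat) : Vec := Nat.iter j (fun x => matvec m M x) y.

Lemma perp_ker_krylov y j : perp_ker m M y -> perp_ker m M (krylov y j).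
Proof.
  intros Hy v Hv; destruct j as [|j]; [apply Hy; exact Hv|].
  change (dot m (matvec m M (krylov y j)) v = 0).
  rewrite M_sym; apply dot_eq0_r; exact Hv.
Qed.

Lemma perp_ker_lincomb n (c : nat -> R) (v : nat -> Vec) :
  (forall j, perp_ker m M (v j)) -> perp_ker m M (fun l => sumR n (fun j => c j * v j l)).
Proof.
  intros Hv z Hz; unfold dot.
  rewrite (sumR_ext m _ (fun l => sumR n (fun j => c j * (v j l * z l))))
    by (intros; rewrite Rmult_comm, <- sumR_scal; apply sumR_ext; intros; ring).
  rewrite sumR_swap; apply sumR_eq0; intros j _.
  rewrite sumR_scal; change (c j * dot m (v j) z = 0); rewrite Hv; auto; ring.
Qed.

(* If the constant coefficient is nonzero, the relation expresses [y] through [M]; otherwise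
   the tail combination lies in [ker M] and is orthogonal to it, hence vanishes, which gives a
   shorter relation. *)
Lemma krylov_relation_range y n c : perp_ker m M y ->
  (exists j, (j < n)%nat /\ c j <> 0) ->
  (forall i, (i < m)%nat -> sumR n (fun j => c j * krylov y j i) = 0) ->
  exists w, forall i, (i < m)%nat -> matvec m M w i = y i.
Proof.
  intros Hy; revert c; induction n as [|n IH]; intros c [j0 [Hj0 Hc0]] Hs; [lia|].
  set (u := fun l => sumR n (fun j => c (S j) * krylov y j l)).
  assert (HMu : forall i, (i < m)%nat -> c 0%nat * y i + matvec m M u i = 0).
  { intros i Hi; unfold u; rewrite matvec_sum, <- (Hs i Hi), sumR_shift; reflexivity. }
  destruct (Req_dec (c 0%nat) 0) as [H0|H0].
  - assert (Hu : forall i, (i < m)%nat -> u i = 0).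
    { apply dot_self_eq0, (perp_ker_lincomb n (fun j => c (S j))).
      - intros j; apply perp_ker_krylov, Hy.
      - intros i Hi; specialize (HMu i Hi); rewrite H0 in HMu; lra. }
    apply (IH (fun j => c (S j))); [|exact Hu].
    destruct j0 as [|j1]; [contradiction|]; exists j1; split; [lia|auto].
  - exists (fun l => (- / c 0%nat) * u l); intros i Hi.
    rewrite matvec_scal; specialize (HMu i Hi).
    replace (matvec m M u i) with (- (c 0%nat * y i)) by lra; field; auto.
Qed.

Lemma perp_ker_range y : perp_ker m M y ->
  exists w, forall i, (i < m)%nat -> matvec m M w i = y i.
Proof.
  intros Hy.
  destruct (underdetermined_homogeneous_system (S m) m (fun i j => krylov y j i))
    as [c [Hnz Hsol]]; [lia|].
  apply (krylov_relation_range y (S m) c Hy Hnz).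
  intros i Hi; rewrite <- (Hsol i Hi); apply sumR_ext; intros; ring.
Qed.

End SymmetricRange.

Section ShiftedSystem.

Variables (m : nat) (M : Mat).
Hypothesis M_psd : forall x, 0 <= dot m (matvec m M x) x.

Definition shifted_step (a : R) (v w : Vec) : Prop :=
  forall i, (i < m)%nat -> matvec m M v i + a * v i = a * w i.

Lemma shifted_step_contract a v w : 0 < a -> shifted_step a v w -> dot m v v <= dot m w w.
Proof.
  intros Ha Hvw.
  assert (E : dot m (matvec m M v) v + a * dot m v v = a * dot m w v).
  { unfold dot; rewrite <- !sumR_scal, <- sumR_plus; apply sumR_ext; intros j Hj.
    replace (a * (w j * v j)) with (a * w j * v j) by ring; rewrite <- (Hvw j Hj); ring. }
  assert (Hcross : 2 * dot m w v <= dot m w w + dot m v v).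
  { unfold dot; rewrite <- sumR_scal, <- sumR_plus; apply sumR_le; intros k _.
    pose proof (Rle_0_sqr (w k - v k)); unfold Rsqr in *; nra. }
  pose proof (M_psd v).
  assert (dot m v v <= dot m w v) by (apply (Rmult_le_reg_l a); lra).
  lra.
Qed.

Lemma shifted_step_unique a v v' w : 0 < a ->
  shifted_step a v w -> shifted_step a v' w -> forall i, (i < m)%nat -> v i = v' i.
Proof.
  intros Ha Hv Hv' i Hi.
  set (d := fun l => 1 * v l + (-1) * v' l).
  assert (Hd : shifted_step a d (fun _ => 0)).
  { intros j Hj; unfold d; rewrite matvec_lin.
    pose proof (Hv j Hj); pose proof (Hv' j Hj); lra. }
  pose proof (shifted_step_contract a d _ Ha Hd) as Hc.
  rewrite (dot_eq0_r m (fun _ => 0)) in Hc by auto.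
  pose proof (dot_self_eq0 m d (Rle_antisym _ _ Hc (dot_self_ge0 m d)) i Hi).
  unfold d in *; lra.
Qed.

Lemma shifted_step_matvec a v w :
  shifted_step a v w -> shifted_step a (matvec m M v) (matvec m M w).
Proof.
  intros Hvw i Hi.
  transitivity (matvec m M (fun l => 1 * matvec m M v l + a * v l) i).
  - rewrite matvec_lin; ring.
  - rewrite <- matvec_scal; apply matvec_ext; intros l Hl; rewrite <- (Hvw l Hl); ring.
Qed.

End ShiftedSystem.

Section ShiftedIteration.

Variables (m : nat) (M : Mat) (a : nat -> R) (e : nat -> Vec) (w : Vec).
Hypothesis M_psd : forall x, 0 <= dot m (matvec m M x) x.
Hypothesis a_pos : forall n, 0 < a n.
Hypothesis shifted_solvable :
  forall n x, (1 <= n)%nat -> exists v, shifted_step m M (a n) v x.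
Hypothesis e_step : forall n, (1 <= n)%nat -> shifted_step m M (a n) (e (S n)) (e n).
Hypothesis e_1 : forall i, (i < m)%nat -> e 1%nat i = matvec m M w i.

(* Uniqueness of shifted solutions, as [M] commutes with [M + a I]. *)
Lemma shifted_iterate_next n W : (1 <= n)%nat ->
  (forall i, (i < m)%nat -> e n i = matvec m M W i) ->
  exists W', shifted_step m M (a n) W' W /\
    forall i, (i < m)%nat -> e (S n) i = matvec m M W' i.
Proof.
  intros Hn HW; destruct (shifted_solvable n W Hn) as [W' HW']; exists W'; split; [exact HW'|].
  apply (shifted_step_unique m M M_psd (a n) _ _ (e n) (a_pos n)); [apply e_step, Hn|].
  intros i Hi; rewrite HW by exact Hi; exact (shifted_step_matvec m M (a n) W' W HW' i Hi).
Qed.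

Lemma shifted_iterate_image n : (1 <= n)%nat ->
  exists W, dot m W W <= dot m w w /\ forall i, (i < m)%nat -> e n i = matvec m M W i.
Proof.
  induction n as [|n IH]; intros Hn; [lia|].
  destruct (Nat.eq_dec n 0) as [->|Hn0]; [exists w; split; [lra|exact e_1]|].
  destruct IH as [W [HWw HW]]; [lia|].
  destruct (shifted_iterate_next n W ltac:(lia) HW) as [W' [HW' He]].
  exists W'; split; [|exact He].
  eapply Rle_trans; [apply (shifted_step_contract m M M_psd (a n) W' W)|]; auto.
Qed.

Lemma shifted_iterate_bound n : (1 <= n)%nat ->
  dot m (e (S n)) (e (S n)) <= 4 * (a n * a n) * dot m w w.
Proof.
  intros Hn; destruct (shifted_iterate_image n Hn) as [W [HWw HW]].
  destruct (shifted_iterate_next n W Hn HW) as [W' [HW' He]].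
  assert (HW'w : dot m W' W' <= dot m w w).
  { eapply Rle_trans; [apply (shifted_step_contract m M M_psd (a n) W' W)|]; auto. }
  assert (Hres : forall i, (i < m)%nat -> e (S n) i = a n * (W i - W' i)).
  { intros i Hi; rewrite He by exact Hi; pose proof (HW' i Hi); lra. }
  apply Rle_trans with (2 * (a n * a n) * (dot m W W + dot m W' W')); [|nra].
  unfold dot; rewrite <- sumR_plus, <- sumR_scal; apply sumR_le; intros i Hi.
  rewrite Hres by exact Hi; pose proof (Rle_0_sqr (W i + W' i)); unfold Rsqr in *; nra.
Qed.

End ShiftedIteration.

Lemma Ta_inverse_shifted_solvable m A a B x :
  is_inverse m (Ta m A a) B -> exists v, shifted_step m (Tmat m A) a v x.
Proof.
  intros HB; exists (fun l => a * matvec m B x l); intros i Hi.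
  rewrite <- matvec_Ta, matvec_scal, matvec_inverse by assumption; reflexivity.
Qed.

Lemma tikhonov_error_step m A f y a B un un1 :
  veq m (matvec m A y) f -> is_inverse m (Ta m A a) B ->
  veq m un1 (fun i => a * matvec m B un i + matvec m B (matvec m (transp A) f) i) ->
  shifted_step m (Tmat m A) a (vsub un1 y) (vsub un y).
Proof.
  intros Hy HB Hun1 i Hi; unfold vsub.
  assert (HTun1 : matvec m (Ta m A a) un1 i = a * un i + matvec m (Tmat m A) y i).
  { rewrite (matvec_ext m _ _ (fun l => a * matvec m B un l + 1 * matvec m B (matvec m (transp A) f) l))
      by (intros l Hl; rewrite Hun1 by exact Hl; ring).
    rewrite matvec_lin, !matvec_inverse by assumption.
    rewrite matvec_Tmat; apply Rplus_eq_compat_l.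
    rewrite Rmult_1_l; apply matvec_ext; intros; symmetry; apply Hy; assumption. }
  rewrite matvec_Ta in HTun1 by exact Hi.
  rewrite (matvec_ext m _ _ (fun l => 1 * un1 l + (-1) * y l)) by (intros; ring).
  rewrite matvec_lin; lra.
Qed.

Lemma norm_le_of_dot m x c : 0 <= c -> dot m x x <= c * c -> norm m x <= c.
Proof.
  intros Hc Hx; unfold norm; rewrite <- (sqrt_square c Hc).
  apply sqrt_le_1_alt; exact Hx.
Qed.

Lemma Un_cv_geometric_bound (x : nat -> R) q C : 0 < q < 1 ->
  (forall n, (1 <= n)%nat -> Rabs (x (S n)) <= C * q ^ n) -> Un_cv x 0.
Proof.
  intros Hq Hx eps Heps.
  assert (HC : 0 < Rabs C + 1) by (pose proof (Rabs_pos C); lra).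
  destruct (pow_lt_1_zero q ltac:(rewrite Rabs_pos_eq; lra) (eps / (Rabs C + 1)))
    as [N HN]; [apply Rdiv_lt_0_compat; lra|].
  exists (S (S N)); intros n Hn; destruct n as [|k]; [lia|].
  unfold R_dist; rewrite Rminus_0_r.
  specialize (HN k ltac:(lia)); specialize (Hx k ltac:(lia)).
  pose proof (pow_lt q k ltac:(lra)) as Hqk; rewrite Rabs_pos_eq in HN by lra.
  apply (Rmult_lt_compat_l (Rabs C + 1)) in HN; [|exact HC].
  replace ((Rabs C + 1) * (eps / (Rabs C + 1))) with eps in HN by (field; lra).
  pose proof (Rle_abs C); nra.
Qed.

Theorem theorem3p1 (m : nat) (A : Mat) (f y : Vec) (q : R)
  (Tinv : nat -> Mat) (u : nat -> Vec) :
  in_range m A f ->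
  min_norm_solution m A f y ->
  0 < q < 1 ->
  (* Tinv n = T_{q^n}^{-1} for n >= 1 *)
  (forall n, (1 <= n)%nat -> is_inverse m (Ta m A (q ^ n)) (Tinv n)) ->
  veq m (u 1%nat) (fun _ => 0) ->
  (forall n, (1 <= n)%nat ->
     veq m (u (S n))
       (fun i => q ^ n * matvec m (Tinv n) (u n) i
                 + matvec m (Tinv n) (matvec m (transp A) f) i)) ->
  Un_cv (fun n => norm m (vsub (u n) y)) 0.
Proof.
  (* [in_range m A f] is implied by [min_norm_solution m A f y]. *)
  intros _ Hmin Hq Hinv Hu1 Hrec.
  destruct (perp_ker_range m (Tmat m A) (Tmat_sym m A) y
              (perp_ker_A_Tmat m A y (min_norm_solution_perp_ker m A f y Hmin))) as [w Hw].
  set (e := fun n => vsub (u n) y); set (w' := fun l => -1 * w l).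
  assert (He1 : forall i, (i < m)%nat -> e 1%nat i = matvec m (Tmat m A) w' i).
  { intros i Hi; unfold e, vsub, w'; rewrite Hu1, matvec_scal, Hw by exact Hi; ring. }
  assert (Hbound := shifted_iterate_bound m (Tmat m A) (fun n => q ^ n) e w' (Tmat_psd m A)
    (fun n => pow_lt q n (proj1 Hq))
    (fun n x Hn => Ta_inverse_shifted_solvable m A _ _ x (Hinv n Hn))
    (fun n Hn => tikhonov_error_step m A f y _ _ _ _ (proj1 Hmin) (Hinv n Hn) (Hrec n Hn))
    He1).
  apply (Un_cv_geometric_bound _ q (2 * norm m w') Hq); intros n Hn.
  assert (Hw' : dot m w' w' = norm m w' * norm m w') by (symmetry; apply sqrt_sqrt, dot_self_ge0).
  assert (0 <= norm m w') by apply sqrt_pos.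
  pose proof (pow_lt q n (proj1 Hq)); specialize (Hbound n Hn); cbv beta in Hbound.
  rewrite Rabs_pos_eq by (unfold norm; apply sqrt_pos).
  apply norm_le_of_dot; fold (e (S n)); nra.
Qed.
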